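(* Let $f\ge0$ be integrable on $[-\pi,\pi]$ with $\int f>0$ and such that $\lim_{n\to\infty}\sigma_{n+1}^2(f)/\sigma_n^2(f)=1$. If $t(\lambda)$ is a nonnegative trigonometric polynomial, then $$\liminf_{n\to\infty}\frac{\sigma_n^2(ft)}{\sigma_n^2(f)}\ge t(0).$$
   Context: For a nonnegative integrable weight $w$ on $[-\pi,\pi]$, $\sigma_n^2(w)=\min_{q\in\mathcal{Q}_n(1)}\int_{-\pi}^{\pi}|q(e^{i\lambda})|^2w(\lambda)\,d\lambda$, where $\mathcal{Q}_n(1)$ is the set of complex polynomials of degree at most $n$ with $q(1)=1$ (the variance of the BLUE of a constant mean from $n+1$ observations of a stationary process with spectral density $w$). *)

From HB Require Import structures.
From mathcomp Require Import all_boot all_order all_algebra.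
From mathcomp Require Import all_classical all_reals all_analysis.
From mathcomp Require Import complex.
Set Implicit Arguments. Unset Strict Implicit. Unset Printing Implicit Defensive.
Import Order.TTheory GRing.Theory Num.Theory.
Local Open Scope classical_set_scope.
Local Open Scope ring_scope.

Section Defs.
Variable R : realType.

Definition expi (x : R) : R[i] := (cos x +i* sin x)%C.

Definition sqmod (z : R[i]) : R := (complex.Re z) ^+ 2 + (complex.Im z) ^+ 2.

Definition Qn1 (n : nat) : set {poly R[i]} :=
  [set q : {poly R[i]} | (size q <= n.+1)%N /\ q.[1] = 1].

(* sigma_n^2(w) = min_{q in Q_n(1)} int_{-pi}^{pi} |q(e^{i l})|^2 w(l) dl
   (defined as the infimum, which is attained) *)
Definition sigma2 (w : R -> R) (n : nat) : R :=
  inf ((fun q : {poly R[i]} => Rintegral (@lebesgue_measure R) `[- pi, pi]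
                     (fun x => sqmod (q.[expi x]) * w x)) @` Qn1 n).

Definition trigpoly (m : nat) (a b : nat -> R) (x : R) : R :=
  \sum_(k < m.+1) (a k * cos (k%:R * x) + b k * sin (k%:R * x)).

End Defs.

(* Given [eps > 0], damp [t] by the Fejer-type factor
   [|h(e^{ix})|^2 = ((1 + cos x) / 2)^K], [h = ((z + 1) / 2)^K], with [K] so large
   that [t(x) ((1 + cos x) / 2)^K <= t(0) + eps]; this is possible because
   [t(x) - t(0) = O(|sin(x/2)|)].  Writing [z^m t] as a polynomial [P] in
   [z = e^{ix}] gives [|P(e^{ix})|^2 = t(x)^2].  For [q] in [Q_n(1)], the polynomial
   [q P h / t(0)] lies in [Q_(n+2m+K)(1)] and
   [|q P h / t(0)|^2 <= |q|^2 t (t(0) + eps) / t(0)^2], whence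
   [sigma_(n+2m+K)^2(f) <= (t(0) + eps) / t(0)^2 * sigma_n^2(f t)].
   Since [sigma_(n+L)^2(f) / sigma_n^2(f) -> 1] for every fixed [L], the liminf of
   [sigma_n^2(f t) / sigma_n^2(f)] is at least [t(0)^2 / (t(0) + eps)]. *)

From HB Require Import structures.
From mathcomp Require Import all_boot all_order all_algebra.
From mathcomp Require Import all_classical all_reals all_analysis.
From mathcomp Require Import complex.
From mathcomp Require Import ring lra zify measurable_realfun.
Import Order.TTheory GRing.Theory Num.Theory.
Import numFieldTopology.Exports numFieldNormedType.Exports.
Set Implicit Arguments. Unset Strict Implicit. Unset Printing Implicit Defensive.
Local Open Scope classical_set_scope.
Local Open Scope ring_scope.
Local Open Scope complex_scope.

Section ComplexExponential.
Variable R : realType.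
Implicit Types (x y : R) (z w : R[i]).

Lemma sqmod_ge0 z : 0 <= sqmod z.
Proof. by rewrite /sqmod addr_ge0 ?sqr_ge0. Qed.

Lemma sqmodM z w : sqmod (z * w) = sqmod z * sqmod w.
Proof. by case: z => a b; case: w => c d; rewrite /sqmod /=; ring. Qed.

Lemma sqmodX z n : sqmod (z ^+ n) = sqmod z ^+ n.
Proof.
elim: n => [|n IH]; last by rewrite !exprS sqmodM IH.
by rewrite /sqmod /= expr0n /= addr0 expr1n.
Qed.

Lemma sqmod_real x : sqmod x%:C = x ^+ 2.
Proof. by rewrite /sqmod /= expr0n /= addr0. Qed.

Lemma sqmod_expi x : sqmod (expi x) = 1.
Proof. by rewrite /sqmod /expi /= cos2Dsin2. Qed.

Lemma expi0 : expi 0 = 1 :> R[i].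
Proof. by rewrite /expi cos0 sin0. Qed.

Lemma expiD x y : expi (x + y) = expi x * expi y.
Proof. by rewrite /expi cosD sinD /=; congr (_ +i* _); ring. Qed.

Lemma expiX x n : expi x ^+ n = expi (n%:R * x).
Proof.
elim: n => [|n IH]; first by rewrite expr0 mul0r expi0.
by rewrite exprS IH -expiD -nat1r mulrDl mul1r.
Qed.

Lemma Re_mul_expi z x : complex.Re (z * expi x) = complex.Re z * cos x - complex.Im z * sin x.
Proof. by case: z. Qed.

Lemma Im_mul_expi z x : complex.Im (z * expi x) = complex.Re z * sin x + complex.Im z * cos x.
Proof. by case: z => a b /=; rewrite addrC. Qed.

Lemma Re_sum I (r : seq I) (P : pred I) (F : I -> R[i]) :
  complex.Re (\sum_(i <- r | P i) F i) = \sum_(i <- r | P i) complex.Re (F i).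
Proof. by apply: (big_morph _ _ (erefl _)) => -[? ?] []. Qed.

Lemma Im_sum I (r : seq I) (P : pred I) (F : I -> R[i]) :
  complex.Im (\sum_(i <- r | P i) F i) = \sum_(i <- r | P i) complex.Im (F i).
Proof. by apply: (big_morph _ _ (erefl _)) => -[? ?] []. Qed.

End ComplexExponential.

Section TrigonometricPolynomials.
Variable R : realType.
Implicit Types (a b : nat -> R) (q : {poly R[i]}) (x : R).

Lemma measurable_trigpoly m a b : measurable_fun setT (trigpoly m a b).
Proof.
have mM (c : R) : measurable_fun setT (fun x : R => c * x) by apply: measurable_funM.
apply: measurable_sum => k; apply: measurable_funD; apply: measurable_funM => //.
- exact: measurableT_comp (continuous_measurable_fun (@continuous_cos R)) (mM _).
- exact: measurableT_comp (continuous_measurable_fun (@continuous_sin R)) (mM _).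
Qed.

Lemma trigpoly_norm_le m a b x :
  `|trigpoly m a b x| <= \sum_(k < m.+1) (`|a k| + `|b k|).
Proof.
apply: le_trans (ler_norm_sum _ _ _) _; apply: ler_sum => k _.
apply: le_trans (ler_normD _ _) _; rewrite !normrM.
by apply: lerD; rewrite ler_piMr // ler_norml ?cos_geN1 ?cos_le1 ?sin_geN1 ?sin_le1.
Qed.

Lemma Re_horner_expi q x : complex.Re q.[expi x] =
  trigpoly (size q) (fun k => complex.Re q`_k) (fun k => - complex.Im q`_k) x.
Proof.
rewrite (horner_coef_wide _ (leqnSn _)) Re_sum; apply: eq_bigr => k _.
by rewrite expiX Re_mul_expi mulNr.
Qed.

Lemma Im_horner_expi q x : complex.Im q.[expi x] =
  trigpoly (size q) (fun k => complex.Im q`_k) (fun k => complex.Re q`_k) x.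
Proof.
rewrite (horner_coef_wide _ (leqnSn _)) Im_sum; apply: eq_bigr => k _.
by rewrite expiX Im_mul_expi addrC.
Qed.

Lemma measurable_sqmod_horner_expi q :
  measurable_fun setT (fun x => sqmod q.[expi x]).
Proof.
rewrite /sqmod; apply: measurable_funD; apply: measurable_funX.
- under eq_fun do rewrite Re_horner_expi; exact: measurable_trigpoly.
- under eq_fun do rewrite Im_horner_expi; exact: measurable_trigpoly.
Qed.

Lemma sqmod_horner_expi_bounded q : exists B : R, forall x, `|sqmod q.[expi x]| <= B.
Proof.
have sqr_le (u c : R) : `|u| <= c -> u ^+ 2 <= c ^+ 2.
  by move=> uc; rewrite -real_normK ?num_real // lerXn2r ?nnegrE // (le_trans _ uc).
eexists => x; rewrite ger0_norm ?sqmod_ge0 // /sqmod Re_horner_expi Im_horner_expi.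
by apply: lerD; apply: sqr_le; exact: trigpoly_norm_le.
Qed.

End TrigonometricPolynomials.

Lemma integrable_mul_bounded (R : realType) (D : set R) (w h : R -> R) (B : R) :
  measurable D -> (@lebesgue_measure R).-integrable D (EFin \o w) ->
  measurable_fun setT h -> (forall x, `|h x| <= B) ->
  (@lebesgue_measure R).-integrable D (EFin \o (fun x => h x * w x)).
Proof.
move=> mD wi mh hB.
have bh : [bounded h x | x in D].
  exists B; split; first exact: num_real.
  by move=> M BM x _; apply: le_trans (hB x) (ltW BM).
rewrite (_ : _ \o _ = (EFin \o h) \* (EFin \o w))%E; last by apply/funext.
exact: (@integrableMr _ _ R (@lebesgue_measure R) D mD h _
  (measurable_funS measurableT (subsetT D) mh) bh wi).
Qed.

Section ExtremalPolynomials.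
Variable R : realType.
Implicit Types (a b : nat -> R) (x : R).

(* [z^m t(x)] in the variable [z = e^{ix}], using
   [cos kx = (z^k + z^-k) / 2] and [sin kx = (z^k - z^-k) / 2i]. *)
Definition poly_trigpoly m a b : {poly R[i]} :=
  \sum_(k < m.+1) (((a k / 2) -i* (b k / 2)) *: 'X^(m + k)
                   + ((a k / 2) +i* (b k / 2)) *: 'X^(m - k)).

Lemma horner_poly_trigpoly_expi m a b x :
  (poly_trigpoly m a b).[expi x] = expi (m%:R * x) * (trigpoly m a b x)%:C.
Proof.
rewrite horner_sum rmorph_sum mulr_sumr; apply: eq_bigr => k _.
have km : (k <= m)%N by rewrite -ltnS.
rewrite hornerD !hornerZ !hornerXn !expiX natrD natrB // mulrDl mulrBl !expiD.
rewrite /expi cosN sinN; case: (cos _ +i* sin _) => e1 e2.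
by apply/eqP; rewrite eq_complex /=; apply/andP; split; apply/eqP; field.
Qed.

Lemma sqmod_poly_trigpoly_expi m a b x :
  sqmod (poly_trigpoly m a b).[expi x] = trigpoly m a b x ^+ 2.
Proof. by rewrite horner_poly_trigpoly_expi sqmodM sqmod_expi mul1r sqmod_real. Qed.

Lemma horner1_poly_trigpoly m a b : (poly_trigpoly m a b).[1] = (trigpoly m a b 0)%:C.
Proof. by rewrite -(expi0 R) horner_poly_trigpoly_expi mulr0 expi0 mul1r. Qed.

Lemma size_poly_trigpoly m a b : (size (poly_trigpoly m a b) <= (m + m).+1)%N.
Proof.
rewrite /poly_trigpoly; elim/big_ind: _ => [|p q sp sq|k _].
- by rewrite size_poly0.
- by rewrite (leq_trans (size_polyD _ _)) // geq_max sp sq.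
have km : (k <= m)%N by rewrite -ltnS.
rewrite (leq_trans (size_polyD _ _)) // geq_max.
by rewrite !(leq_trans (size_scale_leq _ _)) // size_polyXn; lia.
Qed.

Definition peak_poly K : {poly R[i]} := ((2^-1 : R)%:C *: ('X + 1)) ^+ K.

Lemma horner1_peak_poly K : (peak_poly K).[1] = 1.
Proof.
rewrite /peak_poly horner_exp hornerZ hornerD hornerX hornerC.
suff -> : (2^-1 : R)%:C * (1 + 1) = 1 by rewrite expr1n.
by apply/eqP; rewrite eq_complex /=; apply/andP; split; apply/eqP; field.
Qed.

Lemma sqmod_peak_poly_expi K x : sqmod (peak_poly K).[expi x] = ((1 + cos x) / 2) ^+ K.
Proof.
rewrite /peak_poly horner_exp hornerZ hornerD hornerX hornerC sqmodX sqmodM.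
rewrite sqmod_real /sqmod /expi /=; congr (_ ^+ _).
have -> : (cos x + 1) ^+ 2 + (sin x + 0) ^+ 2 = cos x ^+ 2 + sin x ^+ 2 + 2 * cos x + 1.
  by ring.
by rewrite cos2Dsin2; field.
Qed.

Lemma size_peak_poly K : (size (peak_poly K) <= K.+1)%N.
Proof.
rewrite (leq_trans (size_poly_exp_leq _ _)) // ltnS.
have : (size ((2^-1 : R)%:C *: ('X + 1 : {poly R[i]})) <= 2)%N.
  by rewrite (leq_trans (size_scale_leq _ _)) // size_XaddC.
by case: (size _) => [|[|[|s]]] //= _; rewrite ?mul0n ?mul1n.
Qed.

End ExtremalPolynomials.

Section BestLinearUnbiasedVariance.
Variable R : realType.
Implicit Types (w g : R -> R) (q p : {poly R[i]}).

Let mu := @lebesgue_measure R.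

Lemma Qn1_1 n : Qn1 n (1 : {poly R[i]}).
Proof. by split; rewrite ?size_poly1 // hornerC. Qed.

Lemma sigma2_ge0 w n : (forall x, x \in `[- pi, pi] -> 0 <= w x) -> 0 <= sigma2 w n.
Proof.
move=> w0; apply: lb_le_inf; first by eexists; exists 1; first exact: Qn1_1.
move=> _ [q _ <-]; apply: Rintegral_ge0 => x Ix.
by rewrite mulr_ge0 ?sqmod_ge0 ?w0 ?inE.
Qed.

Lemma sigma2_le_integral w n q : (forall x, x \in `[- pi, pi] -> 0 <= w x) -> Qn1 n q ->
  sigma2 w n <= Rintegral mu `[- pi, pi] (fun x => sqmod q.[expi x] * w x).
Proof.
move=> w0 Qq; apply: ge_inf; last by exists q.
exists 0 => _ [p _ <-]; apply: Rintegral_ge0 => x Ix.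
by rewrite mulr_ge0 ?sqmod_ge0 ?w0 ?inE.
Qed.

(* Multiplying a competitor of [Q_n(1)] by [p] gives one of [Q_(n+d)(1)]. *)
Lemma sigma2_mul_le w g p (B C : R) (n d : nat) :
  (forall x, x \in `[- pi, pi] -> 0 <= w x) -> mu.-integrable `[- pi, pi] (EFin \o w) ->
  measurable_fun setT g -> (forall x, `|g x| <= B) ->
  (size p <= d.+1)%N -> p.[1] = 1 -> 0 < C ->
  (forall x, sqmod p.[expi x] <= C * g x) ->
  sigma2 w (n + d) <= C * sigma2 (fun x => w x * g x) n.
Proof.
move=> w0 wi mg gB szp p1 C0 pg.
have mI : measurable (`[- pi, pi] : set R) by exact: measurable_itv.
have wgi : mu.-integrable `[- pi, pi] (EFin \o (fun x => w x * g x)).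
  have -> : (fun x => w x * g x) = (fun x => g x * w x).
    by apply/funext => x; rewrite mulrC.
  exact: integrable_mul_bounded mg gB.
rewrite -ler_pdivrMl //; apply: lb_le_inf; first by eexists; exists 1; first exact: Qn1_1.
move=> _ [q [szq q1] <-]; rewrite ler_pdivrMl //.
have Qqp : Qn1 (n + d) (q * p).
  split; last by rewrite hornerM q1 p1 mulr1.
  have := size_polyMleq q p; rewrite -!subn1 in szq szp *; lia.
apply: le_trans (sigma2_le_integral w0 Qqp) _.
have [Bq Bqp] := sqmod_horner_expi_bounded q.
have [Bqp' Bqp'p] := sqmod_horner_expi_bounded (q * p).
rewrite -RintegralZl //; last exact: integrable_mul_bounded (measurable_sqmod_horner_expi q) Bqp.
apply: le_Rintegral => //.
- exact: integrable_mul_bounded (measurable_sqmod_horner_expi _) Bqp'p.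
- have -> : (fun x => C * (sqmod q.[expi x] * (w x * g x)))
            = (fun x => C * sqmod q.[expi x] * (w x * g x)).
    by apply/funext => x; rewrite mulrA.
  apply: (integrable_mul_bounded (B := C * Bq) mI wgi).
  + by apply: measurable_funM => //; exact: measurable_sqmod_horner_expi.
  + by move=> x; rewrite normrM gtr0_norm // ler_pM2l.
move=> x Ix; have w0x : 0 <= w x by rewrite w0 ?inE.
have -> : C * (sqmod q.[expi x] * (w x * g x)) = sqmod q.[expi x] * (C * g x * w x).
  by ring.
by rewrite hornerM sqmodM -mulrA ler_wpM2l ?sqmod_ge0 // ler_wpM2r.
Qed.

End BestLinearUnbiasedVariance.

Section Damping.
Variable R : realType.
Implicit Types (a b : nat -> R) (s v x y : R).

Lemma natr_mul_expr_le1 v K : 0 <= v <= 1 -> K%:R * v * (1 - v) ^+ K <= 1.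
Proof.
case/andP=> v0 v1.
have bernoulli : (1 - v) ^+ K * (1 + K%:R * v) <= 1.
  elim: K => [|K IH]; first by rewrite expr0 mul0r addr0 mulr1.
  have P0 : 0 <= (1 - v) ^+ K by rewrite exprn_ge0 // subr_ge0.
  have : 0 <= (1 - v) ^+ K * (K.+1%:R * v ^+ 2) by rewrite !mulr_ge0 ?sqr_ge0.
  have -> : (1 - v) ^+ K.+1 * (1 + K.+1%:R * v)
            = (1 - v) ^+ K * (1 + K%:R * v) - (1 - v) ^+ K * (K.+1%:R * v ^+ 2).
    by rewrite exprS -nat1r; ring.
  lra.
have : 0 <= (1 - v) ^+ K by rewrite exprn_ge0 // subr_ge0.
suff : K%:R * v * (1 - v) ^+ K + (1 - v) ^+ K <= 1 by lra.
by rewrite (_ : K%:R * v * _ + _ = (1 - v) ^+ K * (1 + K%:R * v)) //; ring.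
Qed.

Lemma norm_sin_natr_le k y : `|sin (k%:R * y)| <= k%:R * `|sin y|.
Proof.
elim: k => [|k IH]; first by rewrite !mul0r sin0 normr0.
rewrite -nat1r mulrDl mul1r sinD; apply: le_trans (ler_normD _ _) _.
rewrite mulrDl mul1r !normrM lerD //.
  by rewrite ler_piMr // cos_max.
by rewrite (le_trans _ IH) // ler_piMl // cos_max.
Qed.

Lemma trigpoly_le_at0 m a b y :
  trigpoly m a b (y *+ 2) <=
  trigpoly m a b 0 + (\sum_(k < m.+1) 2 * k%:R * (`|a k| + `|b k|)) * `|sin y|.
Proof.
rewrite -lerBlDl /trigpoly -sumrB mulr_suml; apply: ler_sum => k _.
rewrite mulr0 cos0 sin0 !mulr0 mulr1 addr0 [k%:R * _]mulrnAr.
set u := k%:R * y; have hu := norm_sin_natr_le k y; rewrite -/u in hu.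
have -> : a k * cos (u *+ 2) + b k * sin (u *+ 2) - a k
          = - 2 * a k * sin u ^+ 2 + 2 * b k * (cos u * sin u).
  by rewrite cos_mulr2n sin_mulr2n cos2sin2 mulr2n; ring.
apply: le_trans (ler_norm _) _; apply: le_trans (ler_normD _ _) _.
rewrite !normrM normrN normr_nat.
have ss : `|sin u| * `|sin u| <= k%:R * `|sin y|.
  by rewrite (le_trans _ hu) // ler_piMl // sin_max.
have cs : `|cos u| * `|sin u| <= k%:R * `|sin y|.
  by rewrite (le_trans _ hu) // ler_piMl // cos_max.
have := normr_ge0 (a k); have := normr_ge0 (b k); nra.
Qed.

Lemma mul_expr_1subX2_le s d K : 0 <= s <= 1 -> 0 < d -> (0 < K)%N ->
  s * (1 - s ^+ 2) ^+ K <= d + (K%:R * d)^-1.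
Proof.
case/andP=> s0 s1 d0 K0; set P := (1 - s ^+ 2) ^+ K.
have P0 : 0 <= P by rewrite exprn_ge0 // subr_ge0 expr_le1.
have P1 : P <= 1 by rewrite exprn_ile1 // ?subr_ge0 ?expr_le1 // lerBlDr lerDl sqr_ge0.
have hK : K%:R * s ^+ 2 * P <= 1 by apply: natr_mul_expr_le1; rewrite sqr_ge0 expr_le1.
have s_le : s <= d + s ^+ 2 / d.
  rewrite -subr_ge0 (_ : _ - s = ((s - d) ^+ 2 + s * d) / d); last by field; rewrite gt_eqF.
  by rewrite divr_ge0 ?addr_ge0 ?sqr_ge0 ?mulr_ge0 // ltW.
apply: le_trans (ler_wpM2r P0 s_le) _; rewrite mulrDl lerD //.
  by rewrite ler_piMr // ltW.
have -> : s ^+ 2 / d * P = K%:R * s ^+ 2 * P / (K%:R * d).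
  by field; rewrite ?gt_eqF // ltr0n.
by rewrite -[leRHS]mul1r ler_wpM2r // invr_ge0 mulr_ge0 // ltW.
Qed.

Lemma trigpoly_damped_le m a b e : 0 <= trigpoly m a b 0 -> 0 < e ->
  exists K, forall x, trigpoly m a b x * ((1 + cos x) / 2) ^+ K <= trigpoly m a b 0 + e.
Proof.
move=> t00 e0; set c := \sum_(k < m.+1) 2 * k%:R * (`|a k| + `|b k|).
have c0 : 0 <= c by rewrite sumr_ge0 // => k _; rewrite !mulr_ge0 ?addr_ge0.
set d := e / (2 * (c + 1)).
have d0 : 0 < d by rewrite divr_gt0 // mulr_gt0 // ltr_wpDl.
have cd : c * d <= e / 2.
  have -> : c * d = e / 2 * (c / (c + 1)) by rewrite /d; field; rewrite gt_eqF ?ltr_wpDl.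
  by rewrite ler_piMr ?divr_ge0 ?(ltW e0) // ler_pdivrMr ?ltr_wpDl // mul1r lerDl.
set K := (Num.bound (2 * c / (e * d))).+1.
have cK : c * (K%:R * d)^-1 <= e / 2.
  have ed0 : 0 < e * d by rewrite mulr_gt0.
  have /ltW := archi_boundP (divr_ge0 (mulr_ge0 (ler0n _ 2) c0) (ltW ed0)).
  rewrite ler_pdivrMr // => hK.
  have Kd0 : 0 < K%:R * d by rewrite mulr_gt0.
  rewrite ler_pdivlMr // mulrAC ler_pdivrMr //.
  rewrite mulrC (le_trans hK) // (_ : e * (K%:R * d) = K%:R * (e * d)); last by ring.
  by rewrite ler_wpM2r ?(ltW ed0) // ler_nat.
exists K => x.
have x2 : x = (x / 2) *+ 2 by rewrite -mulr_natr divfK.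
set s := `|sin (x / 2)|.
have s01 : 0 <= s <= 1 by rewrite normr_ge0 sin_max.
have /andP[s0 s1] := s01.
have w_eq : (1 + cos x) / 2 = 1 - s ^+ 2.
  by rewrite real_normK ?num_real // [X in cos X]x2 cos_mulr2n cos2sin2 mulr2n; field.
have tx := trigpoly_le_at0 m a b (x / 2); rewrite -x2 -/c -/s in tx.
have wK0 : 0 <= (1 - s ^+ 2) ^+ K by rewrite exprn_ge0 // subr_ge0 expr_le1.
have wK1 : (1 - s ^+ 2) ^+ K <= 1.
  by rewrite exprn_ile1 // ?subr_ge0 ?expr_le1 // lerBlDr lerDl sqr_ge0.
have damp := mul_expr_1subX2_le s01 d0 (ltn0Sn _ : (0 < K)%N).
rewrite w_eq; apply: le_trans (ler_wpM2r wK0 tx) _.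
rewrite mulrDl -mulrA lerD //; first by rewrite ler_piMr.
by rewrite (le_trans (ler_wpM2l c0 damp)) // mulrDr [leRHS]splitr lerD.
Qed.

End Damping.

Section RatioLimits.
Variable R : realType.
Implicit Types (s u : nat -> R).

Lemma ratio_cvg1_neq0 s : (fun n => s n.+1 / s n) @ \oo --> (1 : R) ->
  \forall n \near \oo, s n != 0.
Proof.
move=> /cvgr_dist_lt/(_ _ ltr01); apply: filterS => n.
by apply: contraTneq => ->; rewrite invr0 mulr0 subr0 normr1 ltxx.
Qed.

Lemma cvg_ratio_shift s L : (fun n => s n.+1 / s n) @ \oo --> (1 : R) ->
  (fun n => s (n + L)%N / s n) @ \oo --> (1 : R).
Proof.
move=> hs; elim: L => [|L IH].
  apply: cvg_near_cst; near=> n; rewrite addn0 divff //.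
  by near: n; exact: ratio_cvg1_neq0 hs.
have hsL : (fun n => s (n + L)%N.+1 / s (n + L)%N) @ \oo --> (1 : R).
  by rewrite -(cvg_shiftn L) in hs.
have sL0 : \forall n \near \oo, s (n + L)%N != 0.
  apply: (ratio_cvg1_neq0 (s := fun n => s (n + L)%N)).
  by under eq_fun do rewrite addSn.
rewrite -[X in _ --> X]mulr1; apply: cvg_trans _ (cvgM hsL IH); apply: near_eq_cvg.
by near=> n; rewrite /= addnS mulrA divfK //; near: n; exact: sL0.
Unshelve. all: by end_near. Qed.

Lemma ratio_shift_ge s L (th : R) : (forall n, 0 <= s n) ->
  (fun n => s n.+1 / s n) @ \oo --> (1 : R) -> th < 1 ->
  \forall n \near \oo, 0 < s n /\ th * s n <= s (n + L)%N.
Proof.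
move=> s0 hs th1.
have /cvgr_dist_lt/(_ (1 - th)) := cvg_ratio_shift L hs; rewrite subr_gt0 => /(_ th1) near1.
near=> n; have sn : 0 < s n.
  by rewrite lt0r s0 andbT; near: n; exact: ratio_cvg1_neq0.
split => //; rewrite -ler_pdivlMr //.
have : `|1 - s (n + L)%N / s n| < 1 - th by near: n.
by rewrite ltr_norml => /andP[_]; lra.
Unshelve. all: by end_near. Qed.

Lemma limn_einf_ge u (l : R) : 0 <= l ->
  (forall th, 0 < th < 1 -> \forall n \near \oo, th * l <= u n) ->
  (l%:E <= limn_einf (fun n => (u n)%:E))%E.
Proof.
move=> l0 ev; apply/lee_mul01Pr; first by rewrite lee_fin.
move=> th /ev [N _ HN]; rewrite limn_einf_lim; apply: lime_ge; first exact: is_cvg_einfs.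
exists N => // n /= Nn; apply: le_ereal_inf_tmp => _ [k /= nk <-].
by rewrite lee_fin; apply: HN; exact: leq_trans nk.
Qed.

End RatioLimits.

Lemma sigma2_mul_trigpoly_le (R : realType) (f : R -> R) m (a b : nat -> R) K (M : R) n :
  (forall x, x \in `[- pi, pi] -> 0 <= f x) ->
  (@lebesgue_measure R).-integrable `[- pi, pi] (EFin \o f) ->
  (forall x, 0 <= trigpoly m a b x) -> 0 < trigpoly m a b 0 ->
  (forall x, trigpoly m a b x * ((1 + cos x) / 2) ^+ K <= M) ->
  sigma2 f (n + (m + m + K)) <= M / trigpoly m a b 0 ^+ 2 * sigma2 (fun x => f x * trigpoly m a b x) n.
Proof.
set t := trigpoly m a b => f0 fi t_ge0 t0 tM.
have M0 : 0 < M.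
  have w0 : (1 + cos 0) / 2 = 1 :> R by rewrite cos0; field.
  by have := tM 0; rewrite w0 expr1n mulr1; exact: lt_le_trans.
set p := (t 0)^-1%:C *: (poly_trigpoly m a b * peak_poly R K).
have tB := trigpoly_norm_le m a b.
apply: (sigma2_mul_le (p := p) _ f0 fi (measurable_trigpoly m a b) tB) => //.
- rewrite (leq_trans (size_scale_leq _ _)) // (leq_trans (size_polyMleq _ _)) //.
  by have := size_poly_trigpoly m a b; have := size_peak_poly R K; lia.
- rewrite hornerZ hornerM horner1_poly_trigpoly horner1_peak_poly mulr1 -rmorphM mulVf //.
  exact: lt0r_neq0.
- by rewrite divr_gt0 // exprn_gt0.
move=> x; rewrite hornerZ hornerM !sqmodM sqmod_real sqmod_poly_trigpoly_expi sqmod_peak_poly_expi.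
rewrite -/t; set w := _ ^+ K.
have -> : (t 0)^-1 ^+ 2 * (t x ^+ 2 * w) = (t 0 ^+ 2)^-1 * (t x * (t x * w)).
  by rewrite exprVn; ring.
have -> : M / t 0 ^+ 2 * t x = (t 0 ^+ 2)^-1 * (t x * M) by ring.
by rewrite !ler_wpM2l ?invr_ge0 ?exprn_ge0 ?(ltW t0).
Qed.

Lemma sigma2_trigpoly_ratio_ge (R : realType) (f : R -> R) m (a b : nat -> R) (th : R) :
  (forall x, x \in `[- pi, pi] -> 0 <= f x) ->
  (@lebesgue_measure R).-integrable `[- pi, pi] (EFin \o f) ->
  (fun n => sigma2 f n.+1 / sigma2 f n) @ \oo --> (1 : R) ->
  (forall x, 0 <= trigpoly m a b x) -> 0 < th < 1 ->
  \forall n \near \oo,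
    th * trigpoly m a b 0 <= sigma2 (fun x => f x * trigpoly m a b x) n / sigma2 f n.
Proof.
set t := trigpoly m a b => f0 fi hc t_ge0 /andP[th0 th1].
have ft0 x : x \in `[- pi, pi] -> 0 <= f x * t x by move=> /f0 fx0; rewrite mulr_ge0.
have [t0z|t0] := eqVneq (t 0) 0.
  by near=> n; rewrite t0z mulr0 divr_ge0 ?sigma2_ge0.
have {t0} t0 : 0 < t 0 by rewrite lt0r t0 t_ge0.
set r := (1 + th) / 2.
have r0 : 0 < r by rewrite /r; lra.
have r1 : r < 1 by rewrite /r; lra.
have th_r2 : th <= r ^+ 2.
  by rewrite -subr_ge0 (_ : r ^+ 2 - th = ((1 - th) / 2) ^+ 2) ?sqr_ge0 // /r; field.
have e0 : 0 < t 0 / r - t 0.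
  by rewrite subr_gt0 ltr_pdivlMr // gtr_pMr.
have [K tK] := trigpoly_damped_le (ltW t0) e0; rewrite subrKC in tK.
near=> n.
have [sn snL] : 0 < sigma2 f n /\ r * sigma2 f n <= sigma2 f (n + (m + m + K)).
  by near: n; apply: ratio_shift_ge => // k; exact: sigma2_ge0.
have rt0 : 0 < r * t 0 by rewrite mulr_gt0.
have sL := sigma2_mul_trigpoly_le n f0 fi t_ge0 t0 tK.
rewrite (_ : t 0 / r / t 0 ^+ 2 = (r * t 0)^-1) in sL; last by field; rewrite ?gt_eqF.
have sL_ft : r * t 0 * sigma2 f (n + (m + m + K)) <= sigma2 (fun x => f x * trigpoly m a b x) n.
  by have := ler_wpM2l (ltW rt0) sL; rewrite mulVKf ?lt0r_neq0.
rewrite ler_pdivlMr //; apply: le_trans sL_ft; apply: le_trans (ler_wpM2l (ltW rt0) snL).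
have -> : r * t 0 * (r * sigma2 f n) = r ^+ 2 * t 0 * sigma2 f n by ring.
by have := ler_wpM2r (ltW sn) (ler_wpM2r (ltW t0) th_r2).
Unshelve. all: by end_near. Qed.

Theorem lemma5p1 (R : realType) (f : R -> R) (m : nat) (a b : nat -> R) :
  (forall x, x \in `[- pi, pi] -> 0 <= f x) ->
  (@lebesgue_measure R).-integrable `[- pi, pi] (EFin \o f) ->
  0 < Rintegral (@lebesgue_measure R) `[- pi, pi] f ->
  (fun n => sigma2 f n.+1 / sigma2 f n) @ \oo --> (1 : R) ->
  (forall x, 0 <= trigpoly m a b x) ->
  ((trigpoly m a b 0)%:E <=
   limn_einf (fun n => (sigma2 (fun x => f x * trigpoly m a b x) n
                        / sigma2 f n)%:E))%E.
Proof.
(* For large [n], [sigma2 f n > 0] already follows from the ratio hypothesis,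
   since [x / 0 = 0]. *)
move=> f0 fi _ hc t_ge0; apply: limn_einf_ge => // th th01.
exact: sigma2_trigpoly_ratio_ge.
Qed.
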